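(* Let $N$ and $\tilde{N}$ be real symmetric $n\times n$ matrices such that $N$ is positive semidefinite, $I-N$ and $I-\tilde N$ are positive semidefinite, and $I-\tilde{N}\approx_{\epsilon}I-N$ for some $\epsilon\in[0,1]$. Then $I-\tilde{N}^2\approx_{\epsilon}I-N^2$.
   Context: For real symmetric $X,Y$ and $\epsilon\ge0$, $X\approx_\epsilon Y$ means $(1-\epsilon)v^TYv\le v^TXv\le(1+\epsilon)v^TYv$ for all $v\in\mathbb{R}^n$. *)

From HB Require Import structures.
From mathcomp Require Import all_boot all_order all_algebra.
Set Implicit Arguments. Unset Strict Implicit. Unset Printing Implicit Defensive.
Import Order.TTheory GRing.Theory Num.Theory.
Local Open Scope ring_scope.

Definition qform (R : rcfType) (n : nat) (X : 'M[R]_n) (v : 'cV[R]_n) : R :=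
  (v^T *m X *m v) 0 0.

Definition symmx (R : rcfType) (n : nat) (X : 'M[R]_n) : Prop := X^T = X.

Definition psd (R : rcfType) (n : nat) (X : 'M[R]_n) : Prop :=
  forall v : 'cV[R]_n, 0 <= qform X v.

Definition approx (R : rcfType) (n : nat) (eps : R) (X Y : 'M[R]_n) : Prop :=
  forall v : 'cV[R]_n,
    (1 - eps) * qform Y v <= qform X v /\ qform X v <= (1 + eps) * qform Y v.

From HB Require Import structures.
From mathcomp Require Import all_boot all_order all_algebra.
From mathcomp Require Import ring lra.
Set Implicit Arguments. Unset Strict Implicit. Unset Printing Implicit Defensive.
Import Order.TTheory GRing.Theory Num.Theory.
Local Open Scope ring_scope.

(* For symmetric M, x^T (I - M^2) x is half the minimum over y of
     V_M(x, y) = 2|x - y|^2 - (x-y)^T (I-M) (x-y) + (x+y)^T (I-M) (x+y)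
              = 2 x^T (I - M^2) x + 2 |y - M x|^2,
   attained at y = M x.  V_M is affine in the quadratic forms of I - M, and
   when M is positive semidefinite the negative term -(x-y)^T (I-M) (x-y) is
   dominated by 2|x - y|^2; hence I - Ñ ≈_eps I - N gives V_Ñ ≈_eps V_N
   pointwise, and comparing minima (choosing y = Ñ x, resp. y = N x)
   transfers the approximation to I - Ñ^2 ≈_eps I - N^2. *)

Section BilinearForm.
Variables (R : comNzRingType) (n : nat).
Implicit Types (M : 'M[R]_n) (x y z : 'cV[R]_n).

Definition bform M x y : R := (x^T *m M *m y) 0 0.

Lemma bformDl M x y z : bform M (x + y) z = bform M x z + bform M y z.
Proof. by rewrite /bform linearD /= !mulmxDl mxE. Qed.

Lemma bformBl M x y z : bform M (x - y) z = bform M x z - bform M y z.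
Proof. by rewrite /bform linearB /= !mulmxBl !mxE. Qed.

Lemma bformDr M x y z : bform M z (x + y) = bform M z x + bform M z y.
Proof. by rewrite /bform mulmxDr mxE. Qed.

Lemma bformBr M x y z : bform M z (x - y) = bform M z x - bform M z y.
Proof. by rewrite /bform mulmxBr !mxE. Qed.

Lemma bform_subm M1 M2 x y : bform (M1 - M2) x y = bform M1 x y - bform M2 x y.
Proof. by rewrite /bform mulmxBr mulmxBl !mxE. Qed.

Lemma bform1_mulmxr M x y : bform 1%:M x (M *m y) = bform M x y.
Proof. by rewrite /bform mulmx1 mulmxA. Qed.

Lemma bform_sym M x y : M^T = M -> bform M x y = bform M y x.
Proof.
move=> sM; rewrite /bform -[in LHS](trmxK (x^T *m M *m y)) mxE.
by rewrite !trmx_mul trmxK sM mulmxA.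
Qed.

Lemma bform_mulmx_sym M x :
  M^T = M -> bform (M *m M) x x = bform 1%:M (M *m x) (M *m x).
Proof. by move=> sM; rewrite /bform mulmx1 trmx_mul sM !mulmxA. Qed.

Definition variational_form M x y : R :=
  2 * bform 1%:M (x - y) (x - y) - bform (1%:M - M) (x - y) (x - y)
  + bform (1%:M - M) (x + y) (x + y).

Lemma variational_formE M x y : M^T = M ->
  variational_form M x y =
  2 * bform (1%:M - M *m M) x x + 2 * bform 1%:M (y - M *m x) (y - M *m x).
Proof.
move=> sM; rewrite /variational_form !bform_subm !bformBl !bformDl.
rewrite !bformBr !bformDr bform_mulmx_sym // !bform1_mulmxr.
have sym1 : bform 1%:M y x = bform 1%:M x y by rewrite bform_sym ?trmx1.
have symM : bform M y x = bform M x y by rewrite bform_sym.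
have sym1M : bform 1%:M (M *m x) y = bform M x y.
  by rewrite bform_sym ?trmx1 // bform1_mulmxr symM.
by rewrite sym1 symM sym1M; ring.
Qed.

End BilinearForm.

Section Variational.
Variables (R : rcfType) (n : nat).
Implicit Types (M : 'M[R]_n) (x y : 'cV[R]_n).

Lemma bform1_ge0 x : 0 <= bform 1%:M x x.
Proof.
rewrite /bform mulmx1 mxE sumr_ge0 // => i _.
by rewrite !mxE -expr2 sqr_ge0.
Qed.

Lemma variational_form_ge M x y : M^T = M ->
  2 * bform (1%:M - M *m M) x x <= variational_form M x y.
Proof.
move=> sM; rewrite variational_formE // lerDl.
by rewrite mulr_ge0 ?bform1_ge0.
Qed.

Lemma variational_form_argmin M x : M^T = M ->
  variational_form M x (M *m x) = 2 * bform (1%:M - M *m M) x x.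
Proof.
move=> sM; rewrite variational_formE // subrr.
have -> : bform 1%:M (0 : 'cV[R]_n) 0 = 0 by rewrite /bform mulmx0 mxE.
by rewrite mulr0 addr0.
Qed.

Lemma variational_form_approx (N Nt : 'M[R]_n) (eps : R) x y :
  psd N -> 0 <= eps -> approx eps (1%:M - Nt) (1%:M - N) ->
  (1 - eps) * variational_form N x y <= variational_form Nt x y /\
  variational_form Nt x y <= (1 + eps) * variational_form N x y.
Proof.
move=> pN e0 ap.
have [a1 a2] := ap (x - y); have [b1 b2] := ap (x + y).
have domN : bform (1%:M - N) (x - y) (x - y) <= bform 1%:M (x - y) (x - y).
  by have := pN (x - y); rewrite /qform -/(bform _ _ _) bform_subm; lra.
move: a1 a2 b1 b2; rewrite /qform /variational_form -!/(bform _ _ _).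
move=> a1 a2 b1 b2; split; nra.
Qed.

End Variational.

Theorem mainTheorem7 (R : rcfType) (n : nat) (N Nt : 'M[R]_n) (eps : R) :
  symmx N -> symmx Nt ->
  psd N -> psd (1%:M - N) -> psd (1%:M - Nt) ->
  0 <= eps -> eps <= 1 ->
  approx eps (1%:M - Nt) (1%:M - N) ->
  approx eps (1%:M - Nt *m Nt) (1%:M - N *m N).
Proof.
move=> sN sNt pN _ _ e0 e1 ap x; rewrite /qform -!/(bform _ _ _).
have [lowNt _] := variational_form_approx x (Nt *m x) pN e0 ap.
have [_ uppNt] := variational_form_approx x (N *m x) pN e0 ap.
have geN := variational_form_ge x (Nt *m x) sN.
have geNt := variational_form_ge x (N *m x) sNt.
rewrite variational_form_argmin // in lowNt.
rewrite variational_form_argmin // in uppNt.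
split; nra.
Qed.
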